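(* Consider the multi-class loss system described in the context, with $C$ classes, arrival rates $\boldsymbol{\lambda}=(\lambda_1,\dots,\lambda_C)$, bandwidth vector $\mathbf{h}=(h_1,\dots,h_C)$, transmission-duration vector $\mathbf{s}=(s_1,\dots,s_C)$ and total bandwidth $W$. Fix a positive integer $q$ and an index $i\in\{1,\dots,C\}$, and define $$\mathbf{h}':=(h_1,\dots,h_{i-1},h_i/q,h_{i+1},\dots,h_C),\qquad \mathbf{s}':=(s_1,\dots,s_{i-1},q s_i,s_{i+1},\dots,s_C).$$ If $\rho_i:=\lambda_i s_i<1$, then for every class $c\in\{1,\dots,C\}$ there exists $\tilde W_c$ such that for all $W>\tilde W_c$, $$P^{B}_c(\mathbf{h},\mathbf{s},\boldsymbol{\lambda},W)\;\ge\;P^{B}_c(\mathbf{h}',\mathbf{s}',\boldsymbol{\lambda},W).$$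
   Context: Multi-class loss system (one-shot transmission model with immediate scheduling): there are $C$ classes of packets. Class-$c$ packets arrive according to independent Poisson processes of rate $\lambda_c>0$. An admitted class-$c$ packet occupies bandwidth $h_c>0$ for a deterministic duration $s_c>0$ and then leaves. The total available bandwidth is $W>0$. Let $N_{c'}(t)$ be the number of class-$c'$ packets in transmission at time $t$. A class-$c$ packet arriving at time $t$ is admitted immediately if $h_c+\sum_{c'=1}^C h_{c'}N_{c'}(t)\le W$; otherwise it is blocked (lost). Admitted packets are never preempted. Write $\rho_c:=\lambda_c s_c$. The stationary distribution of $\mathbf{N}=(N_1,\dots,N_C)$ is the truncated product form $\pi(\mathbf{n})=G\prod_{c=1}^C \rho_c^{n_c}/n_c!$ on $\mathcal{S}=\{\mathbf{n}\in\mathbb{Z}_+^C:\sum_c h_c n_c\le W\}$, with $G$ the normalizing constant. The blocking probability of class $c$, $P^{B}_c(\mathbf{h},\mathbf{s},\boldsymbol{\lambda},W)$, is the probability that a typical class-$c$ arrival is blocked, i.e. (by PASTA) $$P^{B}_c(\mathbf{h},\mathbf{s},\boldsymbol{\lambda},W)=\frac{\sum_{\mathbf{n}\in\mathcal{S}:\,h_c+\sum_{c'}h_{c'}n_{c'}>W}\prod_{c'}\rho_{c'}^{n_{c'}}/n_{c'}!}{\sum_{\mathbf{n}\in\mathcal{S}}\prod_{c'}\rho_{c'}^{n_{c'}}/n_{c'}!}.$$ For the primed parameters $(\mathbf{h}',\mathbf{s}')$, the same definition is used with $h_i$ replaced by $h_i/q$ and $\rho_i$ replaced by $\lambda_i q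 s_i=q\rho_i$. *)

From HB Require Import structures.
From mathcomp Require Import all_boot all_order all_algebra.
From mathcomp Require Import reals.
Set Implicit Arguments. Unset Strict Implicit. Unset Printing Implicit Defensive.
Import Order.TTheory GRing.Theory Num.Theory.
Local Open Scope ring_scope.

Section LossSystem.
Variable R : realType.
Variable C : nat.

Definition occupancy (h : 'I_C -> R) (n : 'I_C -> nat) : R :=
  \sum_(c < C) h c * (n c)%:R.

Definition pf_weight (rho : 'I_C -> R) (n : 'I_C -> nat) : R :=
  \prod_(c < C) (rho c ^+ n c / (n c)`!%:R).

(* A uniform bound on every coordinate of a state in
   S = {n : sum_c h_c n_c <= W}: when all h_c > 0 we have
   n_c <= W / h_c < truncn (W/h_c) + 1 <= state_bound h W + 1.
   So enumerating {ffun 'I_C -> 'I_(state_bound h W).+1} covers all of S. *)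
Definition state_bound (h : 'I_C -> R) (W : R) : nat :=
  \sum_(c < C) Num.truncn (W / h c).

Definition state (h : 'I_C -> R) (W : R) := {ffun 'I_C -> 'I_(state_bound h W).+1}.

Definition stv (h : 'I_C -> R) (W : R) (n : state h W) : 'I_C -> nat :=
  fun c => nat_of_ord (n c).

(* Blocking probability of class c (PASTA):
   P^B_c = sum_{n in S, h_c + sum h n > W} w(n) / sum_{n in S} w(n),
   with rho_c = lam_c * s_c. *)
Definition blocking_prob (h s lam : 'I_C -> R) (W : R) (c : 'I_C) : R :=
  let rho := fun j => lam j * s j in
  (\sum_(n : state h W | (occupancy h (stv n) <= W)
                           && (W < h c + occupancy h (stv n)))
      pf_weight rho (stv n))
  / (\sum_(n : state h W | occupancy h (stv n) <= W) pf_weight rho (stv n)).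

Definition split_h (h : 'I_C -> R) (i : 'I_C) (q : nat) : 'I_C -> R :=
  fun j => if j == i then h j / q%:R else h j.
Definition stretch_s (s : 'I_C -> R) (i : 'I_C) (q : nat) : 'I_C -> R :=
  fun j => if j == i then q%:R * s j else s j.

End LossSystem.

(* Write a blocking probability as N / D.  The normalising constant D lies
   between 1 (the empty state) and exp (sum_k rho_k).  Tilting exponentially
   with parameter t, a Chernoff bound gives
     N' <= exp (t (h'_c - W) + sum_k rho'_k exp (t h'_k))
   for the split system.  For the original system choose t so that the tilted
   means la_k = rho_k exp (t h_k) have load sum_k h_k la_k = W; the blocking
   state nearest to la has, by Poisson estimates, weight at least
   exp (sum_k la_k - t W) / poly(W) up to a constant factor.  The two tilted sums differ by
   rho_i (exp (t h_i) - q exp (t h_i / q)), which is exponential in t, while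
   all other losses are exp (O(t)) since t grows like log W. *)

From HB Require Import structures.
From mathcomp Require Import all_boot all_order all_algebra.
From mathcomp Require Import reals.
From mathcomp Require Import all_classical all_reals all_analysis.
From mathcomp Require Import ring lra.
Set Implicit Arguments. Unset Strict Implicit. Unset Printing Implicit Defensive.
Import Order.TTheory GRing.Theory Num.Theory.
Import numFieldNormedType.Exports.
Local Open Scope ring_scope.

Section ProductForm.
Variables (R : realType) (C : nat).
Implicit Types (h rho : 'I_C -> R) (n : 'I_C -> nat) (W t : R).

Definition tilt h rho t (k : 'I_C) : R := rho k * expR (t * h k).

Definition blocking_num h rho W (c : 'I_C) : R :=
  \sum_(n : state h W | (occupancy h (stv n) <= W) && (W < h c + occupancy h (stv n)))
    pf_weight rho (stv n).

Definition blocking_den h rho W : R :=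
  \sum_(n : state h W | occupancy h (stv n) <= W) pf_weight rho (stv n).

Lemma blocking_probE h s lam W c :
  blocking_prob h s lam W c =
  blocking_num h (fun k => lam k * s k) W c / blocking_den h (fun k => lam k * s k) W.
Proof. by []. Qed.

Lemma sum_exp_coeff_le_expR (x : R) (N : nat) : 0 <= x ->
  \sum_(m < N) x ^+ m / (m`!)%:R <= expR x.
Proof.
move=> x0; rewrite -(big_mkord xpredT (fun m => x ^+ m / (m`!)%:R)).
apply: nondecreasing_cvgn_le (is_cvg_series_exp_coeff x) N.
apply: (@nondecreasing_series _ _ xpredT 0) => n _ _.
by rewrite /exp_coeff /= divr_ge0 // exprn_ge0.
Qed.

Lemma pf_weight_ge0 rho n : (forall k, 0 <= rho k) -> 0 <= pf_weight rho n.
Proof.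
by move=> rho0; apply: prodr_ge0 => k _; rewrite divr_ge0 // exprn_ge0.
Qed.

Lemma pf_weight_tilt h rho t n :
  pf_weight (tilt h rho t) n = expR (t * occupancy h n) * pf_weight rho n.
Proof.
rewrite /pf_weight /occupancy mulr_sumr expR_sum -big_split /=.
by apply: eq_bigr => k _; rewrite /tilt mulrA expRM_natr exprMn; ring.
Qed.

Lemma occupancy_ge_term h n k : (forall k, 0 < h k) -> h k * (n k)%:R <= occupancy h n.
Proof.
move=> h0; rewrite /occupancy (bigD1 k) //= lerDl sumr_ge0 // => j _.
by rewrite mulr_ge0 // ltW.
Qed.

(* The truncated state space [state h W] is a box, so the sum of product-form
   weights over it factors into truncated exponential series. *)
Lemma sum_pf_weight_le_expR h rho W (P : pred (state h W)) :
  (forall k, 0 <= rho k) ->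
  \sum_(n : state h W | P n) pf_weight rho (stv n) <= expR (\sum_k rho k).
Proof.
move=> rho0; apply: (@le_trans _ _ (\sum_(n : state h W) pf_weight rho (stv n))).
  rewrite [leRHS](bigID P) /= lerDl sumr_ge0 // => n _.
  exact: pf_weight_ge0.
rewrite /pf_weight /stv /state -(bigA_distr_bigA
  (fun k (m : 'I_(state_bound h W).+1) => rho k ^+ m / (m`!)%:R)) /=.
rewrite expR_sum; apply: ler_prod => k _; rewrite sum_exp_coeff_le_expR //.
by rewrite sumr_ge0 // => m _; rewrite divr_ge0 // exprn_ge0.
Qed.

Lemma blocking_den_ge1 h rho W : 0 <= W -> (forall k, 0 <= rho k) ->
  1 <= blocking_den h rho W.
Proof.
move=> W0 rho0; pose z : state h W := [ffun _ => ord0].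
have z0 : stv z = fun _ => 0%N by apply: funext => k; rewrite /stv ffunE.
have occ_z : occupancy h (stv z) = 0.
  by rewrite z0 /occupancy big1 // => k _; rewrite mulr0.
rewrite /blocking_den (bigD1 z) /=; last by rewrite occ_z.
have -> : pf_weight rho (stv z) = 1.
  by rewrite z0 /pf_weight big1 // => k _; rewrite expr0 divr1.
by rewrite lerDl sumr_ge0 // => n _; exact: pf_weight_ge0.
Qed.

Lemma blocking_den_le_expR h rho W : (forall k, 0 <= rho k) ->
  blocking_den h rho W <= expR (\sum_k rho k).
Proof. exact: sum_pf_weight_le_expR. Qed.

(* Chernoff bound: a blocking state has occupancy above [W - h c]. *)
Lemma blocking_num_le h rho W c t : 0 <= t -> (forall k, 0 <= rho k) ->
  blocking_num h rho W c <= expR (t * (h c - W) + \sum_k tilt h rho t k).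
Proof.
move=> t0 rho0; apply: (@le_trans _ _ (\sum_(n : state h W |
    (occupancy h (stv n) <= W) && (W < h c + occupancy h (stv n)))
    expR (t * (h c - W)) * pf_weight (tilt h rho t) (stv n))).
  apply: ler_sum => n /andP[_ blocked].
  rewrite pf_weight_tilt mulrA -expRD -[leLHS]mul1r ler_wpM2r ?pf_weight_ge0 //.
  by rewrite -expR0 ler_expR -mulrDr mulr_ge0 //; lra.
rewrite -mulr_sumr expRD ler_wpM2l ?expR_ge0 // sum_pf_weight_le_expR // => k.
by rewrite mulr_ge0 ?expR_ge0.
Qed.

Lemma pf_weight_le_blocking_num h rho W c n :
  (forall k, 0 < h k) -> (forall k, 0 <= rho k) ->
  occupancy h n <= W -> W < h c + occupancy h n ->
  pf_weight rho n <= blocking_num h rho W c.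
Proof.
move=> h0 rho0 nW Wn.
have occ0 : 0 <= occupancy h n by apply: sumr_ge0 => k _; rewrite mulr_ge0 // ltW.
have bnd k : (n k < (state_bound h W).+1)%N.
  rewrite ltnS; apply: (@leq_trans (Num.truncn (W / h k))).
    rewrite truncn_ge_nat; last by rewrite divr_ge0 ?(le_trans occ0 nW) ?ltW.
    by rewrite ler_pdivlMr // mulrC (le_trans (occupancy_ge_term n k h0)).
  by rewrite /state_bound (bigD1 k) //= leq_addr.
pose z : state h W := [ffun k => Ordinal (bnd k)].
have zn : stv z = n by apply: funext => k; rewrite /stv ffunE.
rewrite /blocking_num (bigD1 z) /= zn ?nW ?Wn // lerDl.
by rewrite sumr_ge0 // => y _; exact: pf_weight_ge0.
Qed.

End ProductForm.

Section PoissonWeight.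
Variable R : realType.

Lemma expR1_mul_pow_le (m : nat) : expR 1 * (m%:R : R) ^+ m.+1 <= m.+1%:R ^+ m.+1.
Proof.
have m1 : (0 : R) < m.+1%:R by rewrite ltr0n.
have -> : (m%:R : R) = (1 - m.+1%:R^-1) * m.+1%:R.
  by rewrite mulrBl mul1r mulVf ?gt_eqF // -natr1 addrK.
rewrite exprMn mulrA ler_piMl ?(exprn_ge0 _ (ltW m1)) //.
have e1 : 1 - m.+1%:R^-1 <= expR (- m.+1%:R^-1) :> R by exact: expR_ge1Dx.
have e2 := lerXn2r m.+1 (_ : 1 - m.+1%:R^-1 \is Num.nneg) (_ : expR _ \is Num.nneg) e1.
apply: le_trans (ler_wpM2l (expR_ge0 1) (e2 _ _)) _.
- by rewrite nnegrE subr_ge0 invf_le1 // ler1n.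
- by rewrite nnegrE expR_ge0.
by rewrite -expRM_natr mulNr mulVf ?gt_eqF // -expRD subrr expR0.
Qed.

Lemma fact_mul_expR_le (N : nat) :
  (N.+1`!)%:R * expR (N.+1%:R : R) <= expR 1 * N.+1%:R ^+ N.+2.
Proof.
elim: N => [|N IH]; first by rewrite factS fact0 muln1 mul1r expr1n mulr1.
have eN : expR (N.+2%:R) = expR 1 * expR (N.+1%:R) :> R by rewrite -expRD addrC natr1.
have N2 : (0 : R) <= N.+2%:R by rewrite ler0n.
rewrite factS natrM eN mulrACA -mulrA.
apply: le_trans (ler_wpM2l N2 (ler_wpM2l (expR_ge0 1) IH)) _.
rewrite [in leRHS]exprS [leRHS]mulrCA ler_wpM2l // ler_wpM2l ?expR_ge0 //.
exact: expR1_mul_pow_le.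
Qed.

Lemma poisson_weight_ge (r B la : R) (n : nat) : 0 < r -> r <= la ->
  `|n%:R - la| <= B ->
  expR (la - (2 * B + B ^+ 2 / r + 1)) / n.+1%:R <= la ^+ n / (n`!)%:R.
Proof.
move=> r0 rla; rewrite ler_norml => /andP[lo hi].
have la0 : 0 < la := lt_le_trans r0 rla.
have B2r : 0 <= B ^+ 2 / r := divr_ge0 (sqr_ge0 B) (ltW r0).
case: n lo hi => [|N] lo hi.
  rewrite mulr0n in lo hi; rewrite expr0 fact0 !divr1 expR_le1; lra.
set x : R := N.+1%:R in lo hi *.
have x0 : 0 < x by rewrite ltr0n.
have ratio : x ^+ N.+1 <= expR (B + B ^+ 2 / r) * la ^+ N.+1.
  have -> : x ^+ N.+1 = (x / la) ^+ N.+1 * la ^+ N.+1.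
    by rewrite -exprMn divfK ?gt_eqF.
  rewrite ler_wpM2r ?(exprn_ge0 _ (ltW la0)) //.
  apply: le_trans (lerXn2r _ _ _ (_ : x / la <= expR (x / la - 1))) _.
  - by rewrite nnegrE divr_ge0 ?ltW.
  - by rewrite nnegrE expR_ge0.
  - by apply: le_trans (expR_ge1Dx _); rewrite addrC subrK.
  rewrite -expRM_natr -/x ler_expR.
  have -> : (x / la - 1) * x = (x - la) * x / la by field; rewrite gt_eqF.
  have B2la : B ^+ 2 <= B ^+ 2 / r * la.
    by rewrite -mulrA ler_peMr ?sqr_ge0 // mulrC ler_pdivlMr // mul1r.
  have xB : (x - la) * x <= B * x := ler_wpM2r (ltW x0) hi.
  have Bx : B * x <= B * la + B ^+ 2 by rewrite expr2 -mulrDr ler_wpM2l; lra.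
  rewrite ler_pdivrMr // mulrDl; lra.
set K := 2 * B + B ^+ 2 / r + 1.
have xN : x <= N.+2%:R by rewrite /x ler_nat.
have Ex : expR (la - B) <= expR x by rewrite ler_expR; lra.
have eK : la - K + 1 + (B + B ^+ 2 / r) = la - B by rewrite /K; ring.
rewrite ler_pdivrMr ?ltr0n // mulrAC ler_pdivlMr ?ltr0n ?fact_gt0 //.
rewrite -(ler_pM2r (expR_gt0 x)) -mulrA.
apply: le_trans (ler_wpM2l (expR_ge0 _) (fact_mul_expR_le N)) _.
have -> : expR (la - K) * (expR 1 * x ^+ N.+2) = x * (expR (la - K + 1) * x ^+ N.+1).
  by rewrite (expRD (la - K)) [x ^+ N.+2]exprS; ring.
apply: le_trans (ler_wpM2l (ltW x0) (ler_wpM2l (expR_ge0 _) ratio)) _.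
rewrite [expR (la - K + 1) * _]mulrA -expRD eK.
have : x * (expR (la - B) * la ^+ N.+1) <= N.+2%:R * (expR x * la ^+ N.+1).
  by apply: ler_pM; rewrite ?mulr_ge0 ?expR_ge0 ?exprn_ge0 ?ler_wpM2r ?exprn_ge0 // ltW.
lra.
Qed.

End PoissonWeight.

Section TiltedState.
Variables (R : realType) (C : nat).
Implicit Types (h rho la : 'I_C -> R) (W t : R).

Lemma exists_blocking_state_near h la W c :
  (forall k, 0 < h k) -> (forall k, 0 <= la k) -> \sum_k h k * la k = W ->
  exists n : 'I_C -> nat, [/\ occupancy h n <= W, W < h c + occupancy h n &
    forall k, `|(n k)%:R - la k| <= 1 + (\sum_k h k) / h c].
Proof.
move=> h0 la0 load.
pose f k := Num.truncn (la k).
have fI k : (f k)%:R <= la k < (f k)%:R + 1 by rewrite natr1 truncn_itv.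
have fW : occupancy h f <= W.
  rewrite -load; apply: ler_sum => k _; rewrite ler_wpM2l ?(ltW (h0 k)) //.
  by case/andP: (fI k).
have Wf : W - \sum_k h k <= occupancy h f.
  rewrite -load lerBlDr /occupancy -big_split /=; apply: ler_sum => k _.
  rewrite -[X in _ + X]mulr1 -mulrDr ler_wpM2l ?(ltW (h0 k)) //.
  by case/andP: (fI k) => _ /ltW.
pose m := Num.truncn ((W - occupancy h f) / h c).
have /andP[mlo mhi] : m%:R <= (W - occupancy h f) / h c < m%:R + 1.
  by rewrite natr1 truncn_itv // divr_ge0 ?subr_ge0 // ltW.
rewrite ler_pdivlMr // in mlo; rewrite ltr_pdivrMr // in mhi.
have mB : m%:R <= (\sum_k h k) / h c.
  by rewrite ler_pdivlMr //; lra.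
pose n k := (f k + (k == c) * m)%N.
have occ_n : occupancy h n = occupancy h f + h c * m%:R.
  rewrite /occupancy; under eq_bigr do rewrite natrD mulrDr.
  rewrite big_split /=; congr (_ + _).
  rewrite (bigD1 c) //= eqxx mul1n big1 ?addr0 // => k /negbTE ->.
  by rewrite mul0n mulr0.
exists n; rewrite occ_n; split; [lra | lra | move=> k].
have /andP[flo fhi] := fI k.
rewrite ler_norml /n natrD natrM.
have [cm0 cm] : 0 <= (k == c)%:R * m%:R :> R /\ (k == c)%:R * m%:R <= m%:R :> R.
  by case: (k == c); rewrite ?mul1r ?mul0r ?lexx ?ler0n.
apply/andP; split; lra.
Qed.

Lemma continuous_sum_tilt h rho (a : 'I_C -> R) :
  continuous (fun t => \sum_k a k * tilt h rho t k).
Proof.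
apply: continuous_big => [|k _]; first exact: add_continuous.
move=> x; apply: cvgM; first exact: cvg_cst.
apply: cvgM; first exact: cvg_cst.
apply: continuous_comp; last exact: continuous_expR.
by apply: cvgM; [exact: cvg_id | exact: cvg_cst].
Qed.

Lemma exists_tilt h rho W (j : 'I_C) : (forall k, 0 < h k) -> (forall k, 0 < rho k) ->
  \sum_k h k * rho k <= W -> exists2 t, 0 <= t & \sum_k h k * tilt h rho t k = W.
Proof.
move=> h0 rho0 W0.
pose f t := \sum_k h k * tilt h rho t k.
have f0 : f 0 = \sum_k h k * rho k.
  by apply: eq_bigr => k _; rewrite /tilt mul0r expR0 mulr1.
have hrj : 0 < h j * rho j * h j by rewrite !mulr_gt0.
have Wpos : 0 <= W.
  by apply: le_trans W0; apply: sumr_ge0 => k _; rewrite mulr_ge0 // ltW.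
pose tb := W / (h j * rho j * h j).
have tb0 : 0 <= tb by rewrite divr_ge0 // ltW.
have ftb : W <= f tb.
  rewrite /f (bigD1 j) //= -[leLHS]addr0 lerD //; last first.
    by apply: sumr_ge0 => k _; rewrite !mulr_ge0 ?expR_ge0 // ltW.
  apply: (@le_trans _ _ (h j * rho j * (1 + tb * h j))).
    have -> : h j * rho j * (1 + tb * h j) = h j * rho j + W.
      by rewrite /tb; field; rewrite !gt_eqF.
    by rewrite lerDr mulr_ge0 // ltW.
  by rewrite /tilt mulrA ler_wpM2l ?expR_ge1Dx // mulr_ge0 // ltW.
have [t tI ft] : exists2 t, t \in `[0, tb] & f t = W.
  apply: IVT => //; first exact/continuous_subspaceT/continuous_sum_tilt.
  by rewrite f0 ge_min W0 le_max ftb orbT.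
by exists t => //; move: tI; rewrite in_itv /= => /andP[].
Qed.

Lemma sum_tilt_le h rho t H : 0 <= t -> (forall k, 0 <= rho k) -> (forall k, 0 <= h k <= H) ->
  \sum_k h k * tilt h rho t k <= expR (t * H) * \sum_k h k * rho k.
Proof.
move=> t0 rho0 hH; rewrite mulr_sumr; apply: ler_sum => k _.
have /andP[hk0 hkH] := hH k.
by rewrite /tilt mulrA mulrC ler_wpM2r ?mulr_ge0 // ler_expR ler_wpM2l.
Qed.

Lemma exists_tilt_ge h rho (j : 'I_C) (T : R) :
  (forall k, 0 < h k) -> (forall k, 0 < rho k) ->
  exists Wt, forall W, Wt < W ->
    exists2 t, T <= t /\ 0 <= t & \sum_k h k * tilt h rho t k = W.
Proof.
move=> h0 rho0; pose S := \sum_k h k * rho k; pose H := \sum_k h k.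
have S0 : 0 < S.
  by rewrite /S (bigD1 j) //= ltr_pwDl ?mulr_gt0 // sumr_ge0 // => k _; rewrite mulr_ge0 ?ltW.
have hH k : 0 <= h k <= H.
  by rewrite ltW //= /H (bigD1 k) //= lerDl sumr_ge0 // => l _; rewrite ltW.
have H0 : 0 < H by have /andP[_ hjH] := hH j; exact: lt_le_trans (h0 j) hjH.
pose T' := Num.max 0 T.
have T'0 : 0 <= T' by rewrite le_max lexx.
exists (S * expR (H * T')) => W WtW.
have SW : S <= W.
  apply: le_trans (ltW WtW); rewrite ler_peMr ?(ltW S0) // -expR0 ler_expR.
  exact: mulr_ge0 (ltW H0) T'0.
have [t t0 load] := exists_tilt j h0 rho0 SW.
exists t => //; split => //.
have : S * expR (H * T') < S * expR (t * H).
  by apply: lt_le_trans WtW _; rewrite -load mulrC sum_tilt_le // => k; exact: ltW.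
by rewrite ltr_pM2l // ltr_expR mulrC ltr_pM2r // gt_max => /andP[_ /ltW].
Qed.


End TiltedState.

Lemma linear_le_expR_gap (R : realType) (r a b : R) (q : nat) :
  0 < r -> 0 <= b -> (1 < q)%N ->
  exists V, forall v, V <= v -> a + b * v <= r * (expR v ^+ q - q%:R * expR v).
Proof.
move=> r0 b0 q1; exists (q%:R + (`|a| + b) / r) => v vV.
have ab : 0 <= (`|a| + b) / r by rewrite divr_ge0 ?addr_ge0 // ltW.
have q0 : (0 : R) <= q%:R by rewrite ler0n.
have uv : 1 + v <= expR v := expR_ge1Dx v.
set u := expR v in uv *.
have u1 : 1 <= u by lra.
have margin : `|a| + b <= r * (u - q%:R) by rewrite mulrC -ler_pdivrMr //; lra.
have lin : `|a| + b * v <= u * (`|a| + b).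
  by rewrite mulrDr lerD ?ler_peMl // mulrC ler_wpM2r //; lra.
have quad : u * (r * (u - q%:R)) <= r * (u ^+ q - q%:R * u).
  rewrite mulrCA mulrBr [u * q%:R]mulrC ler_wpM2l ?(ltW r0) // lerD2r.
  by rewrite -(subnKC q1) exprD expr2 ler_peMr ?mulr_ge0 ?exprn_ege1 //; lra.
have := ler_wpM2l (le_trans ler01 u1) margin; have := ler_norm a; lra.
Qed.

Lemma prod_div_add1_le (R : realType) (C : nat) (h : 'I_C -> R) (W S E : R) :
  (forall k, 0 < h k) -> 0 <= W -> 1 <= E -> W <= S * E ->
  \prod_k (W / h k + 1) <= \prod_k (S / h k + 1) * E ^+ C.
Proof.
move=> h0 W0 E1 WSE; rewrite -[C in E ^+ C]card_ord -prodr_const -big_split /=.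
apply: ler_prod => k _; have hk := ltW (h0 k).
rewrite addr_ge0 ?divr_ge0 //= mulrDl mul1r lerD //.
by rewrite mulrAC ler_wpM2r ?invr_ge0.
Qed.

Lemma div_le_div_of_bounds (R : realType) (N' D' N D Z : R) :
  0 <= N' -> 1 <= D' -> 0 < D -> D <= Z -> N' * Z <= N -> N' / D' <= N / D.
Proof.
move=> N'0 D'1 D0 DZ NZ.
have Z0 : 0 < Z := lt_le_trans D0 DZ.
apply: (@le_trans _ _ N'); first by rewrite ler_pdivrMr ?(lt_le_trans ltr01) // ler_peMr.
apply: (@le_trans _ _ (N / Z)); first by rewrite ler_pdivlMr.
by rewrite ler_wpM2l ?lef_pV2 ?posrE // (le_trans _ NZ) // mulr_ge0 // ltW.
Qed.

Section BlockingLowerBound.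
Variables (R : realType) (C : nat) (h rho : 'I_C -> R) (c : 'I_C).
Hypotheses (h0 : forall k, 0 < h k) (rho0 : forall k, 0 < rho k).

(* Witnessed by the blocking state nearest to the tilted means [tilt h rho t],
   whose Poisson weights are polynomially close to their maxima. *)
Lemma blocking_num_ge_tilt : exists K, forall W t,
  0 <= t -> \sum_k h k * tilt h rho t k = W ->
  expR (\sum_k tilt h rho t k - t * W - K) / \prod_k (W / h k + 1)
    <= blocking_num h rho W c.
Proof.
pose B := 1 + (\sum_k h k) / h c.
pose K := \sum_k (2 * B + B ^+ 2 / rho k + 1).
exists K => W t t0 load; set la := tilt h rho t.
have rho_la k : rho k <= la k.
  by rewrite -[leLHS]mulr1 ler_wpM2l ?(ltW (rho0 k)) // -expR0 ler_expR mulr_ge0 // ltW.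
have la0 k : 0 <= la k := le_trans (ltW (rho0 k)) (rho_la k).
have [n [nW Wn dev]] := exists_blocking_state_near c h0 la0 load.
have W0 : 0 <= W by apply: le_trans nW; apply: sumr_ge0 => k _; rewrite mulr_ge0 // ltW.
apply: le_trans (pf_weight_le_blocking_num h0 (fun k => ltW (rho0 k)) nW Wn).
have -> : pf_weight rho n = expR (- (t * occupancy h n)) * pf_weight la n.
  by rewrite pf_weight_tilt mulrA -expRD addNr expR0 mul1r.
have poisson : expR (\sum_k la k - K) / \prod_k (n k).+1%:R <= pf_weight la n.
  rewrite /K -sumrB expR_sum -prodf_div; apply: ler_prod => k _.
  rewrite divr_ge0 ?expR_ge0 ?ler0n //=.
  exact: poisson_weight_ge (rho0 k) (rho_la k) (dev k).
have states : \prod_k (n k).+1%:R <= \prod_k (W / h k + 1).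
  apply: ler_prod => k _; rewrite ler0n -natr1 lerD2r ler_pdivlMr // mulrC.
  exact: le_trans (occupancy_ge_term n k h0) nW.
have -> : \sum_k la k - t * W - K = - (t * W) + (\sum_k la k - K) by ring.
rewrite expRD -mulrA; apply: ler_pM; rewrite ?expR_ge0 ?ler_expR //.
- by rewrite divr_ge0 ?expR_ge0 // prodr_ge0 // => k _; rewrite addr_ge0 ?divr_ge0 // ltW.
- by rewrite lerN2 ler_wpM2l.
apply: le_trans poisson; rewrite ler_pM2l ?expR_gt0 // lef_pV2 ?posrE //.
- by rewrite prodr_gt0 // => k _; rewrite ltr_pwDr // divr_ge0 // ltW.
- by rewrite prodr_gt0 // => k _; rewrite ltr0n.
Qed.

End BlockingLowerBound.

Definition split_rho (R : realType) (C : nat) (rho : 'I_C -> R) (i : 'I_C) (q : nat)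
  (k : 'I_C) : R := if k == i then q%:R * rho k else rho k.

Lemma mul_stretch_s (R : realType) (C : nat) (lam s : 'I_C -> R) i q :
  (fun k => lam k * stretch_s s i q k) = split_rho (fun k => lam k * s k) i q.
Proof. by apply: funext => k; rewrite /stretch_s /split_rho; case: eqP => // _; ring. Qed.

Section SplitComparison.
Variables (R : realType) (C : nat) (h rho : 'I_C -> R) (i c : 'I_C) (q : nat).
Hypotheses (h0 : forall k, 0 < h k) (rho0 : forall k, 0 < rho k) (q1 : (1 < q)%N).

Local Notation h' := (split_h h i q).
Local Notation rho' := (split_rho rho i q).
Local Notation H := (\sum_k h k).
Local Notation gap t := (rho i * (expR (t * h i / q%:R) ^+ q - q%:R * expR (t * h i / q%:R))).

Let q0 : (0 : R) < q%:R.
Proof. by rewrite ltr0n ltnW. Qed.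

Let h_le_H k : 0 <= h k <= H.
Proof. by rewrite ltW //= (bigD1 k) //= lerDl sumr_ge0 // => j _; rewrite ltW. Qed.

Let h'_gt0 k : 0 < h' k.
Proof. by rewrite /split_h; case: eqP => _; rewrite ?divr_gt0. Qed.

Let rho'_ge0 k : 0 <= rho' k.
Proof. by rewrite /split_rho ltW //; case: eqP => _; rewrite ?mulr_gt0. Qed.

Lemma sum_tilt_split t : \sum_k tilt h' rho' t k = \sum_k tilt h rho t k - gap t.
Proof.
rewrite (bigD1 i) //= [in RHS](bigD1 i) //= addrAC; congr (_ + _); last first.
  by apply: eq_bigr => k /negbTE ki; rewrite /tilt /split_h /split_rho ki.
rewrite /tilt /split_h /split_rho eqxx -expRM_natr mulrA divfK ?gt_eqF //.
ring.
Qed.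

Lemma blocking_num_split_le W t : 0 <= t ->
  blocking_num h' rho' W c <= expR (t * (H - W) + \sum_k tilt h rho t k - gap t).
Proof.
move=> t0; apply: le_trans (blocking_num_le h' W c t0 rho'_ge0) _.
rewrite sum_tilt_split addrA ler_expR lerD2r lerD2r ler_wpM2l // lerD2r.
have /andP[_ hcH] := h_le_H c.
apply: le_trans hcH; rewrite /split_h; case: eqP => // _.
by rewrite ler_pdivrMr // ler_peMr ?(ltW (h0 c)) // ler1n ltnW.
Qed.

Theorem blocking_ratio_split_le : exists Wt, forall W, Wt < W ->
  blocking_num h' rho' W c / blocking_den h' rho' W
    <= blocking_num h rho W c / blocking_den h rho W.
Proof.
pose S := \sum_k h k * rho k; pose P := \prod_k (S / h k + 1).
have S0 : 0 <= S by apply: sumr_ge0 => k _; rewrite mulr_ge0 // ltW.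
have P0 : 0 < P by rewrite prodr_gt0 // => k _; rewrite ltr_pwDr // divr_ge0 // ltW.
have [K lower] := blocking_num_ge_tilt c h0 rho0.
pose b := C.+1%:R * H * q%:R / h i.
have b0 : 0 <= b by rewrite divr_ge0 ?mulr_ge0 ?sumr_ge0 ?ler0n // => [k _|]; rewrite ltW.
have [V gapV] := linear_le_expR_gap (ln P + \sum_k rho k + K) (rho0 i) b0 q1.
have [Wt large] := exists_tilt_ge i (V * q%:R / h i) h0 rho0.
exists Wt => W /large[t [Vt t0] load].
have W0 : 0 <= W by rewrite -load sumr_ge0 // => k _; rewrite mulr_ge0 ?mulr_ge0 ?expR_ge0 ?ltW.
have gapt : ln P + \sum_k rho k + K + (C%:R + 1) * (t * H) <= gap t.
  have -> : (C%:R + 1) * (t * H) = b * (t * h i / q%:R).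
    by rewrite /b natr1; field; rewrite !gt_eqF.
  by apply: gapV; rewrite ler_pdivlMr // -ler_pdivrMr.
apply: (@div_le_div_of_bounds _ _ _ _ _ (expR (\sum_k rho k))).
- by apply: sumr_ge0 => n _; exact: pf_weight_ge0.
- exact: blocking_den_ge1.
- exact: lt_le_trans ltr01 (blocking_den_ge1 h W0 (fun k => ltW (rho0 k))).
- exact: blocking_den_le_expR (fun k => ltW (rho0 k)).
apply: le_trans (lower W t t0 load).
apply: le_trans (ler_wpM2r (expR_ge0 _) (blocking_num_split_le W t0)) _.
rewrite ler_pdivlMr; last by rewrite prodr_gt0 // => k _; rewrite ltr_pwDr // divr_ge0 // ltW.
have states : \prod_k (W / h k + 1) <= P * expR (t * H) ^+ C.
  apply: prod_div_add1_le h0 W0 _ _.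
    by rewrite -expR0 ler_expR mulr_ge0 // sumr_ge0 // => k _; rewrite ltW.
  by rewrite -load mulrC sum_tilt_le // => k; exact: ltW.
apply: le_trans (ler_wpM2l _ states) _; first by rewrite mulr_ge0 ?expR_ge0.
rewrite -(lnK P0) -[expR (t * H) ^+ C]expRM_natr -!expRD ler_expR; lra.
Qed.

End SplitComparison.

Theorem theorem1 (R : realType) (C : nat) (lam h s : 'I_C -> R)
  (hlam : forall c, 0 < lam c) (hh : forall c, 0 < h c) (hs : forall c, 0 < s c)
  (q : nat) (hq : (0 < q)%N) (i : 'I_C) (hrho : lam i * s i < 1) :
  forall c : 'I_C, exists Wt : R, forall W : R, Wt < W ->
    blocking_prob (split_h h i q) (stretch_s s i q) lam W c
      <= blocking_prob h s lam W c.
Proof.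
move=> c; have [q1|q1] : q = 1%N \/ (1 < q)%N by case: q hq => [|[|q']]; [|left|right].
  have -> : split_h h i q = h.
    by apply: funext => k; rewrite /split_h q1 divr1; case: eqP.
  have -> : stretch_s s i q = s.
    by apply: funext => k; rewrite /stretch_s q1 mul1r; case: eqP.
  by exists 0 => W _.
have rho0 k : 0 < lam k * s k by rewrite mulr_gt0.
have [Wt ratio] := blocking_ratio_split_le i c hh rho0 q1.
by exists Wt => W /ratio; rewrite !blocking_probE mul_stretch_s.
Qed.
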